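(* Let $N$ be an odd prime, $V=\mathbb{Z}_N\times\mathbb{Z}_N$, and let $X=\{v_1,\dots,v_r\}\subset V$ be a set of $r$ points. Choose at random three (pairwise distinct) lines $L,M,M^\circ\subset V$, and assume that $X$ is generic with respect to each of $L$, $M$ and $M^\circ$. Then the probability $P$ that $X$ is perfect with respect to $L,M,M^\circ$ satisfies $$P\ge 1-\frac{r(r^2-r)}{N}.$$
   Context: A line in $V$ means a subset through $(0,0)$ of the form $\{(\tau,a\tau):\tau\in\mathbb{Z}_N\}$, $a\in\mathbb{Z}_N$, or $\{(0,\omega):\omega\in\mathbb{Z}_N\}$ ($N+1$ lines in total); a shifted line is a set $L+v$ with $L$ a line and $v\in V$. A set $X\subset V$ is generic with respect to a line $L$ if $u-v\notin L$ for all distinct $u,v\in X$. For a family $\mathcal{F}$ of shifted lines, a point $v\in V$ is an incidence point of $\mathcal{F}$ if it lies on at least two shifted lines of $\mathcal{F}$, and its incidence number is the number of shifted lines of $\mathcal{F}$ containing it. A collection $v_1,\dots,v_r$ is perfect with respect to lines $L_1,\dots,L_d$ if $v_1,\dots,v_r$ are the only incidence points of $\mathcal{F}=\{v_i+L_j:1\le i\le r,\,1\le j\le d\}$ with incidence number $d$. The probability is over the random choice of the lines, given the genericity assumption. *)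

From mathcomp Require Import all_boot all_algebra.
Set Implicit Arguments. Unset Strict Implicit. Unset Printing Implicit Defensive.
Import GRing.Theory.
Local Open Scope ring_scope.

Definition V (N : nat) : finType := ('Z_N * 'Z_N)%type.

Definition vadd N (u v : V N) : V N := (u.1 + v.1, u.2 + v.2).
Definition vsub N (u v : V N) : V N := (u.1 - v.1, u.2 - v.2).

(* The N+1 lines through the origin: {(t, a t)} for a in Z_N, and {(0, w)}. *)
Definition line (N : nat) (o : option 'Z_N) : {set V N} :=
  match o with
  | Some a => [set ((t, a * t) : V N) | t : 'Z_N]
  | None => [set ((0, w) : V N) | w : 'Z_N]
  end.

Definition lines (N : nat) : {set {set V N}} := [set line (N:=N) o | o : option 'Z_N].

Definition shift N (L : {set V N}) (v : V N) : {set V N} :=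
  [set vadd u v | u in L].

Definition generic N (X L : {set V N}) : bool :=
  [forall u in X, forall v in X, (u != v) ==> (vsub u v \notin L)].

Definition family N (X : {set V N}) (Ls : seq {set V N}) : {set {set V N}} :=
  [set shift L v | v in X, L in Ls].

Definition incnum N (X : {set V N}) (Ls : seq {set V N}) (p : V N) : nat :=
  #|[set l in family X Ls | p \in l]|.

(* X is perfect w.r.t. L_1..L_d: the incidence points (incidence number >= 2)
   of incidence number d are exactly the points of X. *)
Definition perfect N (X : {set V N}) (Ls : seq {set V N}) : bool :=
  [set p | (1 < incnum X Ls p)%N && (incnum X Ls p == size Ls)] == X.

Definition triple N := ({set V N} * {set V N} * {set V N})%type.

(* Sample space: ordered triples of pairwise distinct lines, conditioned on
   X being generic with respect to each of them. *)
Definition good_triples N (X : {set V N}) : {set triple N} :=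
  [set t : triple N |
    [&& t.1.1 \in lines N, t.1.2 \in lines N, t.2 \in lines N,
        t.1.1 != t.1.2, t.1.1 != t.2, t.1.2 != t.2,
        generic X t.1.1, generic X t.1.2 & generic X t.2]].

Definition perfect_triples N (X : {set V N}) : {set triple N} :=
  [set t in good_triples X | perfect X [:: t.1.1; t.1.2; t.2]].

(* If (L, M, K) is not perfect, some point p outside X has incidence number 3, i.e. lies on
   a + L, b + M and c + K for points a, b, c of X, necessarily pairwise distinct since two
   distinct lines through the origin meet only there.  With L and M fixed, the distinct pair
   (a, b) determines p as the intersection of a + L and b + M, and then c determines K as the
   line through p - c; hence at most r(r-1)(r-2) choices of K are bad.  On the other hand each
   ordered pair of distinct points of X destroys genericity for one line only, so at least
   N - 2 - r(r-1) choices of K are admissible.  Comparing the two counts in every fibre over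
   (L, M) gives the bound. *)

From Pilot Require Import Defs.
From mathcomp Require Import all_boot all_algebra.
From mathcomp Require Import zify.
Set Implicit Arguments. Unset Strict Implicit. Unset Printing Implicit Defensive.
Import GRing.Theory Num.Theory.

Lemma card_fibers (T I : finType) (f : T -> I) (A : {set T}) :
  #|A| = (\sum_(i : I) #|[set x in A | f x == i]|).
Proof.
rewrite -sum1_card (partition_big f xpredT) //=; apply: eq_bigr => i _.
by rewrite -sum1_card; apply: eq_bigl => x; rewrite inE.
Qed.

Lemma fiber_arith (N r b g : nat) : b <= g -> b <= r ^_ 3 ->
  (0 < g -> N <= g + 2 + r ^_ 2) -> N * b <= r * (r * r - r) * g.
Proof.
move=> le_bg; case: r => [|[|[|s]]]; first 3 last.
- rewrite !ffactnS ffactn0 !muln1 /= => le_bs.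
  case: (posnP g) => [g0 _ | g_gt0 /(_ isT) le_Ng].
    by move: le_bg; rewrite g0 leqn0 => /eqP ->; rewrite muln0.
  have -> : s.+3 * (s.+3 * s.+3 - s.+3) = s.+3 * s.+3 * s.+2.
    by rewrite -mulnA; congr (_ * _); lia.
  have [le_N_big | big_N] := leqP N (s.+3 * s.+3 * s.+2); first by nia.
  have key : N * s.+1 <= s.+3 * g by nia.
  by apply: leq_trans (leq_mul (leqnn N) le_bs) _; nia.
all: by rewrite leqn0 => /eqP -> _; rewrite muln0.
Qed.

Local Open Scope ring_scope.

Lemma Zp_mulf_eq0 (p : nat) (x y : 'Z_p) : prime p ->
  (x * y == 0) = (x == 0) || (y == 0).
Proof.
move=> p_pr; have [->|nz_x] /= := eqVneq x 0; first by rewrite mul0r eqxx.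
have x_unit : x \is a GRing.unit.
  have x_lt_p : (x < p)%N by rewrite -[p in (_ < p)%N](Zp_cast (prime_gt1 p_pr)).
  have x_gt0 : (0 < x)%N by rewrite lt0n; apply: contra nz_x => /eqP x0; apply/eqP/val_inj.
  by rewrite -[x]natr_Zp unitZpE ?prime_gt1 // prime_coprime // gtnNdvd.
by rewrite -{1}(mulr0 x) (inj_eq (mulrI x_unit)).
Qed.

Lemma card_le_witness (T U : finType) (A : {set T}) (B : {set U}) (R : T -> U -> bool) :
  (forall t, t \in A -> exists2 u, u \in B & R t u) ->
  (forall t t' u, t \in A -> t' \in A -> u \in B -> R t u -> R t' u -> t = t') ->
  (#|A| <= #|B|)%N.
Proof.
move=> wit uniq_wit; pose f t := [pick u in B | R t u].
have f_wit t : t \in A -> exists2 u, f t = Some u & (u \in B) && R t u.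
  move=> tA; rewrite /f; case: pickP => [u uBR|no_u]; first by exists u.
  by have [u uB Rtu] := wit t tA; move: (no_u u); rewrite uB Rtu.
have f_inj : {in A &, injective f}.
  move=> t t' tA t'A eq_f; have [u ftu /andP [uB Rtu]] := f_wit t tA.
  have [u' ft'u /andP [_ Rt'u]] := f_wit t' t'A.
  by apply: (uniq_wit t t' u) => //; move: ft'u; rewrite -eq_f ftu => -[->].
rewrite -(card_in_imset f_inj) -(card_imset B Some_inj); apply: subset_leq_card.
apply/subsetP => _ /imsetP [t tA ->]; have [u -> /andP [uB _]] := f_wit t tA.
exact: imset_f.
Qed.

Section AffinePlane.

Variable N : nat.
Implicit Types (X L M K : {set V N}) (Ls : seq {set V N}) (u v w p : V N).

Lemma vaddE u v : vadd u v = u + v. Proof. by []. Qed.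

Lemma mem_line_slope a u : (u \in line (Some a)) = (u.2 == a * u.1).
Proof. by apply/imsetP/eqP => [[t _ ->] //|]; case: u => x y /= ->; exists x. Qed.

Lemma mem_line_vertical u : (u \in line None) = (u.1 == 0).
Proof. by apply/imsetP/eqP => [[t _ ->] //|]; case: u => x y /= ->; exists y. Qed.

Lemma linesP L : reflect (exists o, L = line o) (L \in lines N).
Proof. by apply: (iffP imsetP) => [[o _ ->]|[o ->]]; exists o. Qed.

Lemma mem_line0 L : L \in lines N -> 0 \in L.
Proof.
by case/linesP => [[a|] ->]; rewrite ?mem_line_slope ?mem_line_vertical /= ?mulr0.
Qed.

Lemma mem_lineB L u v : L \in lines N -> u \in L -> v \in L -> u - v \in L.
Proof.
case/linesP => [[a|] ->]; rewrite ?mem_line_slope ?mem_line_vertical /=.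
  by move=> /eqP -> /eqP ->; rewrite mulrBr.
by move=> /eqP -> /eqP ->; rewrite subr0.
Qed.

Lemma mem_lineD L u v : L \in lines N -> u \in L -> v \in L -> u + v \in L.
Proof.
move=> L_line uL vL; rewrite -[v]opprK; apply: mem_lineB => //.
by rewrite -sub0r; apply: mem_lineB; rewrite // mem_line0.
Qed.

Lemma mem_shift L v p : (p \in shift L v) = (p - v \in L).
Proof.
apply/imsetP/idP => [[u uL ->]|pvL]; first by rewrite vaddE addrK.
by exists (p - v); rewrite // vaddE subrK.
Qed.

Lemma shift_id L v : L \in lines N -> v \in shift L v.
Proof. by move=> L_line; rewrite mem_shift subrr mem_line0. Qed.

Lemma shift_eq L v w : L \in lines N -> v - w \in L -> shift L v = shift L w.
Proof.
move=> L_line vwL; apply/setP => p; rewrite !mem_shift.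
have -> : p - w = (p - v) + (v - w) by rewrite addrA subrK.
apply/idP/idP => [pvL|]; first exact: mem_lineD.
by move=> /mem_lineB /(_ vwL); rewrite addrK; apply.
Qed.

Lemma shift_line_inj L M v w : L \in lines N -> M \in lines N ->
  shift L v = shift M w -> L = M.
Proof.
suff sub_LM : forall L M v w, L \in lines N -> M \in lines N ->
    shift L v = shift M w -> {subset L <= M}.
  move=> L_line M_line eq_sh; apply/setP => u.
  by apply/idP/idP; [apply: (sub_LM L M v w) | apply: (sub_LM M L w v)].
move=> {}L {}M {}v {}w L_line M_line eq_sh u uL.
have : u + v \in shift M w by rewrite -eq_sh mem_shift addrK.
have : v \in shift M w by rewrite -eq_sh shift_id.
rewrite !mem_shift => vwM uvwM.
by have := mem_lineB M_line uvwM vwM; rewrite opprB addrA subrK addrK.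
Qed.

Definition on_shifts (X : {set V N}) L p := [exists v in X, p \in shift L v].

Lemma family_nil X : Defs.family X [::] = set0.
Proof. by apply/setP => l; rewrite inE; apply/imset2P => -[]. Qed.

Lemma family_cons X L Ls :
  Defs.family X (L :: Ls) = [set shift L v | v in X] :|: Defs.family X Ls.
Proof.
apply/setP => l; rewrite inE; apply/imset2P/orP.
  by case=> v M vX; rewrite inE => /orP [/eqP ->|MLs] ->; [left|right];
    [apply: imset_f | apply/imset2P; exists v M].
case=> [/imsetP [v vX ->]|/imset2P [v M vX MLs ->]].
  by exists v L; rewrite ?inE ?eqxx.
by exists v M; rewrite ?inE ?MLs ?orbT.
Qed.

Lemma card_shifts_through X L p : L \in lines N ->
  #|[set l in [set shift L v | v in X] | p \in l]| = on_shifts X L p.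
Proof.
move=> L_line; rewrite /on_shifts; case: exists_inP => [[v vX pv]|no_v].
  apply/eqP/cards1P; exists (shift L v); apply/setP => l; rewrite !inE.
  apply/andP/eqP => [[/imsetP [w wX ->] pw]|->]; last by rewrite imset_f.
  apply: shift_eq => //; move: pv pw; rewrite !mem_shift => pv pw.
  by have := mem_lineB L_line pv pw; rewrite opprB addrC subrKA.
apply/eqP; rewrite cards_eq0; apply/eqP/setP => l; rewrite !inE.
by apply/andP => -[/imsetP [v vX ->] pv]; apply: no_v; exists v.
Qed.

Lemma incnum_cons X L Ls p : L \in lines N -> {subset Ls <= lines N} -> L \notin Ls ->
  incnum X (L :: Ls) p = (on_shifts X L p + incnum X Ls p)%N.
Proof.
move=> L_line Ls_lines L_Ls; rewrite /incnum family_cons setIdE setIUl -!setIdE.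
set A := [set l in _ | _]; set B := [set l in _ | _].
have disjAB : A :&: B = set0.
  apply/setP => l; rewrite !inE; apply/negP.
  move=> /andP [/andP [/imsetP [v _ ->] _] /andP [/imset2P [w M _ MLs eq_sh] _]].
  by move: L_Ls; rewrite (shift_line_inj L_line (Ls_lines M MLs) eq_sh) MLs.
by rewrite cardsU disjAB cards0 subn0 card_shifts_through.
Qed.

Lemma incnum_count X Ls p : uniq Ls -> {subset Ls <= lines N} ->
  incnum X Ls p = count (on_shifts X ^~ p) Ls.
Proof.
elim: Ls => [|L Ls IHLs] /= => [_ _|/andP [L_Ls uLs] Ls_lines].
  by rewrite /incnum family_nil setIdE set0I cards0.
have sub_Ls : {subset Ls <= lines N} by move=> M MLs; apply: Ls_lines; rewrite inE MLs orbT.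
by rewrite incnum_cons ?IHLs // Ls_lines ?mem_head.
Qed.

Lemma not_perfect_witness X Ls : (1 < size Ls)%N -> uniq Ls -> {subset Ls <= lines N} ->
  ~~ perfect X Ls -> exists2 p, p \notin X & all (on_shifts X ^~ p) Ls.
Proof.
move=> Ls_gt1 uLs Ls_lines; rewrite /perfect.
have incnumE p : incnum X Ls p = count (on_shifts X ^~ p) Ls by rewrite incnum_count.
set S := [set p | _]; have X_S : X \subset S.
  apply/subsetP => x xX; rewrite inE incnumE.
  suff : all (on_shifts X ^~ x) Ls by rewrite all_count => /eqP ->; rewrite Ls_gt1 eqxx.
  by apply/allP => L LLs; apply/exists_inP; exists x; rewrite // shift_id ?Ls_lines.
rewrite eqEsubset X_S andbT => /subsetPn [p]; rewrite inE incnumE => /andP [_].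
by rewrite -all_count => all_p p_X; exists p.
Qed.

Hypothesis N_prime : prime N.

Lemma lines_meet0 L M u : L \in lines N -> M \in lines N -> L != M ->
  u \in L -> u \in M -> u = 0.
Proof.
case/linesP => [o ->] /linesP [o' ->]; case: u => x y.
case: o o' => [a|] [b|] neq_LM; rewrite ?mem_line_slope ?mem_line_vertical /=.
- move=> /eqP -> /eqP eq_ab.
  have : (a - b) * x == 0 by rewrite mulrBl eq_ab subrr.
  rewrite Zp_mulf_eq0 // subr_eq0 => /orP [/eqP eq_ab'|/eqP ->]; last by rewrite mulr0.
  by rewrite eq_ab' eqxx in neq_LM.
- by move=> /eqP -> /eqP ->; rewrite mulr0.
- by move=> /eqP -> /eqP ->; rewrite mulr0.
- by rewrite eqxx in neq_LM.
Qed.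

Lemma lines_eq L M u : L \in lines N -> M \in lines N -> u != 0 ->
  u \in L -> u \in M -> L = M.
Proof.
move=> L_line M_line nz_u uL uM; apply/eqP; apply: contraNT nz_u => neq_LM.
by rewrite (lines_meet0 L_line M_line neq_LM uL uM).
Qed.

Lemma shifts_meet_once L M a b p q : L \in lines N -> M \in lines N -> L != M ->
  p \in shift L a -> p \in shift M b -> q \in shift L a -> q \in shift M b -> p = q.
Proof.
move=> L_line M_line neq_LM; rewrite !mem_shift => pL pM qL qM.
apply/eqP; rewrite -subr_eq0; apply/eqP/(lines_meet0 L_line M_line neq_LM).
  by have := mem_lineB L_line pL qL; rewrite opprB subrKA.
by have := mem_lineB M_line pM qM; rewrite opprB subrKA.
Qed.

Lemma card_lines_ge : (N <= #|lines N|)%N.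
Proof.
have slope_inj : injective (fun a : 'Z_N => line (Some a)).
  move=> a b eq_ab; have : ((1, a) : V N) \in line (Some a) by rewrite mem_line_slope mulr1.
  by rewrite eq_ab mem_line_slope mulr1 => /eqP.
have card_ZN : #|[set: 'Z_N]| = N by rewrite cardsT card_ord Zp_cast // prime_gt1.
rewrite -[N in (N <= _)%N]card_ZN -(card_imset _ slope_inj).
by apply/subset_leq_card/subsetP => _ /imsetP [a _ ->]; apply: imset_f.
Qed.

Lemma card_nongeneric_lines X : (#|[set L in lines N | ~~ generic X L]| <= #|X| ^_ 2)%N.
Proof.
rewrite -(card_uniq_tuples 2 (mem X)).
apply: (card_le_witness (R := fun L (w : 2.-tuple (V N)) => w`_0 - w`_1 \in L)).
  move=> L; rewrite inE => /andP [_ /forall_inPn [u uX /forall_inPn [v vX]]].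
  rewrite negb_imply negbK => /andP [neq_uv uvL].
  by exists [tuple u; v]; rewrite // inE /= uX vX /= inE neq_uv.
move=> L L' w; rewrite !inE => /andP [L_line _] /andP [L'_line _] /andP [_ uniq_w].
by apply: lines_eq => //; rewrite subr_eq0 nth_uniq ?size_tuple.
Qed.

Lemma good_tripleP X L M K : (L, M, K) \in good_triples X ->
  [/\ L \in lines N, M \in lines N, K \in lines N & [/\ L != M, L != K & M != K]].
Proof. by rewrite inE /= => /and5P [-> -> -> -> /and5P [-> -> _ _ _]]. Qed.

Definition bad_witness X (t : triple N) (w : seq (V N)) := [exists p, [&& p \notin X,
  p \in shift t.1.1 w`_0, p \in shift t.1.2 w`_1 & p \in shift t.2 w`_2]].

Lemma bad_witness_exists X t : t \in good_triples X :\: perfect_triples X ->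
  exists2 w : 3.-tuple (V N),
    w \in [set w : 3.-tuple _ | all (mem X) w & uniq w] & bad_witness X t w.
Proof.
case: t => -[L M] K /setDP [good not_perf].
have [L_line M_line K_line [neq_LM neq_LK neq_MK]] := good_tripleP good.
have [p pX] : exists2 p, p \notin X & all (on_shifts X ^~ p) [:: L; M; K].
  apply: not_perfect_witness => //; first by rewrite /= !inE negb_or neq_LM neq_LK neq_MK.
    by move=> l; rewrite !inE => /or3P [] /eqP ->.
  by move: not_perf; rewrite /perfect_triples in_set good.
rewrite /= andbT => /and3P [/exists_inP [a aX pa] /exists_inP [b bX pb] /exists_inP [c cX pc]].
have neq_base l l' v w : l \in lines N -> l' \in lines N -> l != l' -> v \in X ->
    p \in shift l v -> p \in shift l' w -> v != w.
  move=> l_line l'_line neq_ll' vX pv pw; apply/eqP => eq_vw; rewrite -eq_vw in pw.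
  have := shifts_meet_once l_line l'_line neq_ll' pv pw (shift_id v l_line) (shift_id v l'_line).
  by move=> p_v; move: pX; rewrite p_v vX.
exists [tuple a; b; c]; last by apply/existsP; exists p; rewrite pX pa pb pc.
rewrite inE /= aX bX cX /= !inE !negb_or.
by rewrite (neq_base L M a b) ?(neq_base L K a c) ?(neq_base M K b c).
Qed.

Lemma bad_witness_inj X t t' (w : 3.-tuple (V N)) :
  t \in good_triples X -> t' \in good_triples X -> t.1 = t'.1 -> all (mem X) w ->
  bad_witness X t w -> bad_witness X t' w -> t = t'.
Proof.
case: t t' => -[L M] K [[L' M'] K'] good good' /= [<- <-] w_in_X.
have [L_line M_line K_line [neq_LM _ _]] := good_tripleP good.
have [_ _ K'_line _] := good_tripleP good'.
move=> /existsP [p /and4P [pX /= pL pM pK]] /existsP [q /and4P [_ /= qL qM qK']].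
rewrite -(shifts_meet_once L_line M_line neq_LM pL pM qL qM) in qK'.
suff -> : K = K' by [].
apply: (lines_eq K_line K'_line (u := p - w`_2)); rewrite -?mem_shift //.
by rewrite subr_eq0; apply: contraNneq pX => ->; apply: (allP w_in_X); rewrite mem_nth ?size_tuple.
Qed.

Lemma card_bad_fiber X L M :
  (#|[set t in good_triples X :\: perfect_triples X | t.1 == (L, M)]| <= #|X| ^_ 3)%N.
Proof.
rewrite -(card_uniq_tuples 3 (mem X)).
apply: (card_le_witness (R := fun t (w : 3.-tuple (V N)) => bad_witness X t w)).
  by move=> t /setIdP [bad _]; apply: bad_witness_exists.
move=> t t' w.
move=> /setIdP [/setDP [good _] /eqP eq_t] /setIdP [/setDP [good' _] /eqP eq_t'].
by rewrite inE => /andP [w_in_X _]; apply: bad_witness_inj; rewrite ?eq_t.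
Qed.

Lemma card_good_fiber X L M : [set t in good_triples X | t.1 == (L, M)] != set0 ->
  (N <= #|[set t in good_triples X | t.1 == (L, M)]| + 2 + #|X| ^_ 2)%N.
Proof.
set F := [set t in _ | _]; set G := [set K in lines N | generic X K].
case/set0Pn => -[[L' M'] K0] /setIdP [good0 /eqP [eqL eqM]]; subst L' M'.
have [L_line M_line _ [neq_LM _ _]] := good_tripleP good0.
move: good0; rewrite inE /= => /and5P [_ _ _ _ /and5P [_ _ gen_L gen_M _]].
have G_F : (#|G :\: [set L; M]| <= #|F|)%N.
  rewrite -(card_imset _ (fun K K' (eq_KK' : (L, M, K) = (L, M, K')) => congr1 snd eq_KK')).
  apply/subset_leq_card/subsetP => t /imsetP [K]; rewrite !inE negb_or.
  move=> /andP [/andP [neq_KL neq_KM] /andP [K_line gen_K]] ->.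
  by rewrite /= L_line M_line K_line neq_LM gen_L gen_M gen_K eq_sym neq_KL eq_sym neq_KM eqxx.
have G_le : (#|G| <= #|G :\: [set L; M]| + 2)%N.
  rewrite -(cardsID [set L; M] G) addnC leq_add2l.
  by apply: leq_trans (subset_leq_card (subsetIr G _)) _; rewrite cards2 ltnS leq_b1.
set nG := [set K in lines N | ~~ generic X K].
have lines_split : #|lines N| = (#|G| + #|nG|)%N.
  rewrite -(cardsID [set K | generic X K] (lines N)).
  by congr (_ + _)%N; apply: eq_card => K; rewrite !inE // andbC.
have nG_le : (#|nG| <= #|X| ^_ 2)%N := card_nongeneric_lines X.
have := card_lines_ge; clearbody F G nG.
(* The cardinalities are generalized so that lia sees syntactically equal atoms. *)
by move: #|F| #|G| #|G :\: _| #|lines N| #|nG| (#|X| ^_ 2)%N G_F G_le lines_split nG_le; lia.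
Qed.

Lemma fiber_bound X L M :
  (N * #|[set t in good_triples X :\: perfect_triples X | t.1 == (L, M)]|
    <= #|X| * (#|X| * #|X| - #|X|) * #|[set t in good_triples X | t.1 == (L, M)]|)%N.
Proof.
apply: fiber_arith.
- by apply/subset_leq_card/subsetP => t; rewrite !inE -!andbA => /and3P [_ ->].
- exact: card_bad_fiber.
- by rewrite card_gt0; apply: card_good_fiber.
Qed.

End AffinePlane.

Theorem mainTheorem3 (N : nat) (X : {set V N}) (r : nat) :
  prime N -> odd N -> #|X| = r ->
  (1 - (r%:R * (r%:R ^+ 2 - r%:R)) / N%:R) * (#|good_triples X|%:R : rat)
    <= (#|perfect_triples X|%:R : rat).
Proof.
move=> N_prime _ card_X.
set good := good_triples X; set perf := perfect_triples X.
have perf_good : perf \subset good by apply/subsetP => t; rewrite inE => /andP [].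
have good_split : #|good| = (#|perf| + #|good :\: perf|)%N.
  by rewrite -(cardsID perf good) (setIidPr perf_good).
have bad_le : (N * #|good :\: perf| <= r * (r * r - r) * #|good|)%N.
  rewrite (card_fibers fst (good :\: perf)) (card_fibers fst good) !big_distrr /=.
  by apply: leq_sum => -[L M] _; rewrite -card_X fiber_bound.
have r_le_r2 : (r <= r * r)%N by nia.
have N_gt0 : (0 < N%:R :> rat) by rewrite ltr0n prime_gt0.
rewrite expr2 -natrM -natrB // -natrM mulrBl mul1r lerBlDr good_split natrD lerD2l.
by rewrite mulrAC ler_pdivlMr // -natrD -!natrM ler_nat -good_split mulnC.
Qed.
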